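(* Let $\mathbb K$ be an algebraically closed field and let $q\in\mathbb K$ be nonzero and not a root of unity. Let $U_q(\widehat{sl}_2)$ be the unital associative $\mathbb K$-algebra with generators $e^{\pm}_i, K_i^{\pm1}$ ($i\in\{0,1\}$) and relations $K_iK_i^{-1}=K_i^{-1}K_i=1$; $K_0K_1=K_1K_0$; $K_ie^{\pm}_iK_i^{-1}=q^{\pm2}e^{\pm}_i$; $K_ie^{\pm}_jK_i^{-1}=q^{\mp2}e^{\pm}_j$ for $i\neq j$; $[e^+_i,e^-_i]=\frac{K_i-K_i^{-1}}{q-q^{-1}}$; $[e^{\pm}_0,e^{\mp}_1]=0$; and $(e^{\pm}_i)^3e^{\pm}_j-[3]_q(e^{\pm}_i)^2e^{\pm}_je^{\pm}_i+[3]_qe^{\pm}_ie^{\pm}_j(e^{\pm}_i)^2-e^{\pm}_j(e^{\pm}_i)^3=0$ for $i\neq j$. Let $\mathcal U$ be the unital associative $\mathbb K$-algebra with generators $y^{\pm}_i, k_i^{\pm1}$ ($i\in\{0,1\}$) and relations $k_ik_i^{-1}=k_i^{-1}k_i=1$; $k_0k_1$ is central; $\frac{qy^+_ik_i-q^{-1}k_iy^+_i}{q-q^{-1}}=1$; $\frac{qk_iy^-_i-q^{-1}y^-_ik_i}{q-q^{-1}}=1$; $\frac{qy^-_iy^+_i-q^{-1}y^+_iy^-_i}{q-q^{-1}}=1$; $\frac{qy^+_iy^-_j-q^{-1}y^-_jy^+_i}{q-q^{-1}}=k_0^{-1}k_1^{-1}$ for $i\neq j$; and $(y^{\pm}_i)^3y^{\pm}_j-[3]_q(y^{\pm}_i)^2y^{\pm}_jy^{\pm}_i+[3]_qy^{\pm}_iy^{\pm}_j(y^{\pm}_i)^2-y^{\pm}_j(y^{\pm}_i)^3=0$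 for $i\neq j$. Then there is an isomorphism of $\mathbb K$-algebras $\mathcal U\to U_q(\widehat{sl}_2)$ given by $k_i^{\pm1}\mapsto K_i^{\pm1}$, $y^-_i\mapsto K_i^{-1}+e^-_i$, $y^+_i\mapsto K_i^{-1}-q(q-q^{-1})^2K_i^{-1}e^+_i$, whose inverse is given by $K_i^{\pm1}\mapsto k_i^{\pm1}$, $e^-_i\mapsto y^-_i-k_i^{-1}$, $e^+_i\mapsto \frac{1-k_iy^+_i}{q(q-q^{-1})^2}$.
   Context: $[n]_q=\frac{q^n-q^{-n}}{q-q^{-1}}$ for $n\ge 0$; $[X,Y]=XY-YX$. *)

(* Algebras given by generators and relations are encoded
   through their universal property. *)
From HB Require Import structures.
From mathcomp Require Import all_boot all_order all_algebra.
Set Implicit Arguments. Unset Strict Implicit. Unset Printing Implicit Defensive.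
Import Order.TTheory GRing.Theory Num.Theory.
Local Open Scope ring_scope.

Definition qint (F : fieldType) (q : F) (n : nat) : F :=
  (q ^+ n - q ^- n) / (q - q^-1).

Definition not_root_of_unity (F : fieldType) (q : F) : Prop :=
  forall n : nat, (0 < n)%N -> q ^+ n != 1.

Definition alg_hom (F : fieldType) (A C : algType F) (f : A -> C) : Prop :=
  [/\ forall x y, f (x + y) = f x + f y,
      forall (a : F) x, f (a *: x) = a *: f x,
      f 1 = 1 &
      forall x y, f (x * y) = f x * f y].

Definition serre (F : fieldType) (q : F) (A : algType F) (x y : A) : A :=
  x ^+ 3 * y - qint q 3 *: (x ^+ 2 * y * x) + qint q 3 *: (x * y * x ^+ 2)
  - y * x ^+ 3.

Record Uq_gens (F : fieldType) (A : algType F) := UqGens {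
  ep : 'I_2 -> A;
  em : 'I_2 -> A;
  Kp : 'I_2 -> A;
  Km : 'I_2 -> A
}.

Definition Uq_rel (F : fieldType) (q : F) (A : algType F) (g : Uq_gens A) : Prop :=
  (forall i, Kp g i * Km g i = 1 /\ Km g i * Kp g i = 1) /\
  (Kp g 0 * Kp g 1 = Kp g 1 * Kp g 0) /\
  (forall i, Kp g i * ep g i * Km g i = q ^+ 2 *: ep g i
             /\ Kp g i * em g i * Km g i = q ^- 2 *: em g i) /\
  (forall i j, i != j ->
               Kp g i * ep g j * Km g i = q ^- 2 *: ep g j
             /\ Kp g i * em g j * Km g i = q ^+ 2 *: em g j) /\
  (forall i, ep g i * em g i - em g i * ep g i
                = (q - q^-1)^-1 *: (Kp g i - Km g i)) /\
  (ep g 0 * em g 1 - em g 1 * ep g 0 = 0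
        /\ em g 0 * ep g 1 - ep g 1 * em g 0 = 0) /\
  (forall i j, i != j ->
        serre q (ep g i) (ep g j) = 0 /\ serre q (em g i) (em g j) = 0).

Definition Uq_hom_on_gens (F : fieldType) (A C : algType F)
    (g : Uq_gens A) (h : Uq_gens C) (f : A -> C) : Prop :=
  forall i, [/\ f (ep g i) = ep h i, f (em g i) = em h i,
                f (Kp g i) = Kp h i & f (Km g i) = Km h i].

Definition is_Uq (F : fieldType) (q : F) (A : algType F) (g : Uq_gens A) : Prop :=
  Uq_rel q g /\
  forall (C : algType F) (h : Uq_gens C), Uq_rel q h ->
    exists f : A -> C, [/\ alg_hom f, Uq_hom_on_gens g h f &
      forall f' : A -> C, alg_hom f' -> Uq_hom_on_gens g h f' -> f' =1 f].

Record U_gens (F : fieldType) (A : algType F) := UGens {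
  yp : 'I_2 -> A;
  ym : 'I_2 -> A;
  kp : 'I_2 -> A;
  km : 'I_2 -> A
}.

Definition U_rel (F : fieldType) (q : F) (A : algType F) (g : U_gens A) : Prop :=
  let c := kp g 0 * kp g 1 in
  (forall i, kp g i * km g i = 1 /\ km g i * kp g i = 1) /\
  (forall i, [/\ c * yp g i = yp g i * c, c * ym g i = ym g i * c,
                 c * kp g i = kp g i * c & c * km g i = km g i * c]) /\
  (forall i, (q - q^-1)^-1 *: (q *: (yp g i * kp g i) - q^-1 *: (kp g i * yp g i)) = 1) /\
  (forall i, (q - q^-1)^-1 *: (q *: (kp g i * ym g i) - q^-1 *: (ym g i * kp g i)) = 1) /\
  (forall i, (q - q^-1)^-1 *: (q *: (ym g i * yp g i) - q^-1 *: (yp g i * ym g i)) = 1) /\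
  (forall i j, i != j ->
        (q - q^-1)^-1 *: (q *: (yp g i * ym g j) - q^-1 *: (ym g j * yp g i))
          = km g 0 * km g 1) /\
  (forall i j, i != j ->
        serre q (yp g i) (yp g j) = 0 /\ serre q (ym g i) (ym g j) = 0).

Definition U_hom_on_gens (F : fieldType) (A C : algType F)
    (g : U_gens A) (h : U_gens C) (f : A -> C) : Prop :=
  forall i, [/\ f (yp g i) = yp h i, f (ym g i) = ym h i,
                f (kp g i) = kp h i & f (km g i) = km h i].

Definition is_U (F : fieldType) (q : F) (A : algType F) (g : U_gens A) : Prop :=
  U_rel q g /\
  forall (C : algType F) (h : U_gens C), U_rel q h ->
    exists f : A -> C, [/\ alg_hom f, U_hom_on_gens g h f &
      forall f' : A -> C, alg_hom f' -> U_hom_on_gens g h f' -> f' =1 f].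

From HB Require Import structures.
From mathcomp Require Import all_boot all_order all_algebra.
From mathcomp Require Import ring.
Set Implicit Arguments. Unset Strict Implicit. Unset Printing Implicit Defensive.
Import Order.TTheory GRing.Theory Num.Theory.
Local Open Scope ring_scope.

(** With [E_i = q (q - q^-1)^2 e^+_i] and [F_i = e^-_i], the substitutions
    [y^+_i = K_i^-1 - K_i^-1 E_i], [y^-_i = K_i^-1 + F_i] and
    [E_i = 1 - k_i y^+_i], [F_i = y^-_i - k_i^-1] are mutually inverse, so it
    suffices to show that the relations of each algebra hold for the substituted
    generators of the other.  For the quadratic relations both sides reduce to the
    same normal form once words are reordered, by the q-commutation relations, so
    that the group-like generators stand to the left.  The q-Serre relations transfer
    because, when [a] and [b] commute and [f], [g] q-commute with them with opposite
    weights, [serre (a + f) (b + g) = serre f g] and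
    [serre (a - a f) (b - b g) = a^3 b serre f g].  The universal properties then give
    algebra maps in both directions whose composites fix the generators, hence are
    the identity. *)

(** * Normal ordering modulo quadratic rewriting rules *)

(** A monomial [(c, (e, w))] stands for [c t^e x_(w_1) ... x_(w_n)] and a rule
    [(i, j, r)] for the equation [x_i x_j = r].  The tactic [nc_normalize env t]
    proves an equation between algebra expressions in the letters [env], with
    coefficients Laurent polynomials in [t], using as rules every hypothesis
    [x * y = r] with [x], [y] in [env]: both sides are expanded, rewritten a bounded
    number of times (one redex per monomial and step) and compared coefficientwise. *)

Inductive sexpr : Type :=
  | SVar | SVarInv | SVarExpN of nat | SOne
  | SAdd of sexpr & sexpr | SOpp of sexpr | SMul of sexpr & sexpr | SExp of sexpr & nat.

Inductive aexpr : Type :=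
  | ALetter of nat | AZero | AOne
  | AAdd of aexpr & aexpr | AOpp of aexpr | AMul of aexpr & aexpr
  | AExp of aexpr & nat | AScale of sexpr & aexpr.

Definition monomial := (int * (int * seq nat))%type.
Definition npoly := seq monomial.
Definition rule := (nat * nat * aexpr)%type.

Definition monomial_mul (m1 m2 : monomial) : monomial :=
  (m1.1 * m2.1, (m1.2.1 + m2.2.1, m1.2.2 ++ m2.2.2)).
Definition npoly_mul (p1 p2 : npoly) : npoly :=
  [seq monomial_mul m1 m2 | m1 <- p1, m2 <- p2].
Definition npoly_opp (p : npoly) : npoly := [seq (- m.1, m.2) | m <- p].
Definition npoly_term (c e : int) (w : seq nat) : npoly := [:: (c, (e, w))].
Fixpoint npoly_exp (p : npoly) (n : nat) : npoly :=
  if n is n'.+1 then npoly_mul p (npoly_exp p n') else npoly_term 1 0 [::].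

Fixpoint npoly_of_sexpr (s : sexpr) : npoly :=
  match s with
  | SVar => npoly_term 1 1 [::]
  | SVarInv => npoly_term 1 (-1) [::]
  | SVarExpN n => npoly_term 1 (- n%:Z) [::]
  | SOne => npoly_term 1 0 [::]
  | SAdd a b => npoly_of_sexpr a ++ npoly_of_sexpr b
  | SOpp a => npoly_opp (npoly_of_sexpr a)
  | SMul a b => npoly_mul (npoly_of_sexpr a) (npoly_of_sexpr b)
  | SExp a n => npoly_exp (npoly_of_sexpr a) n
  end.

Fixpoint npoly_of_aexpr (e : aexpr) : npoly :=
  match e with
  | ALetter i => npoly_term 1 0 [:: i]
  | AZero => [::]
  | AOne => npoly_term 1 0 [::]
  | AAdd a b => npoly_of_aexpr a ++ npoly_of_aexpr b
  | AOpp a => npoly_opp (npoly_of_aexpr a)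
  | AMul a b => npoly_mul (npoly_of_aexpr a) (npoly_of_aexpr b)
  | AExp a n => npoly_exp (npoly_of_aexpr a) n
  | AScale s a => npoly_mul (npoly_of_sexpr s) (npoly_of_aexpr a)
  end.

Fixpoint rule_rhs (rs : seq rule) (x y : nat) : option aexpr :=
  if rs is r :: rs' then
    if (r.1.1 == x) && (r.1.2 == y) then Some r.2 else rule_rhs rs' x y
  else None.

Fixpoint redex (rs : seq rule) (w : seq nat) : option (seq nat * aexpr * seq nat) :=
  if w is x :: w' then
    if w' is y :: w'' then
      if rule_rhs rs x y is Some r then Some ([::], r, w'')
      else omap (fun uev => (x :: uev.1.1, uev.1.2, uev.2)) (redex rs w')
    else None
  else None.

Definition rewrite_monomial rs (m : monomial) : npoly :=
  if redex rs m.2.2 is Some (u, r, v) then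
    npoly_mul (npoly_mul (npoly_term m.1 m.2.1 u) (npoly_of_aexpr r)) (npoly_term 1 0 v)
  else [:: m].

Definition rewrite_step rs (p : npoly) : npoly := flatten (map (rewrite_monomial rs) p).

Definition npoly_coef (p : npoly) (k : int * seq nat) : int :=
  foldr (fun m c => if m.2 == k then m.1 + c else c) 0 p.

Definition npoly_eqb (p1 p2 : npoly) : bool :=
  all (fun k => npoly_coef p1 k == npoly_coef p2 k) (undup (map snd p1 ++ map snd p2)).

Section Semantics.
Variables (F : fieldType) (t : F) (A : algType F) (env : seq A).

Fixpoint seval (s : sexpr) : F :=
  match s with
  | SVar => t
  | SVarInv => t^-1
  | SVarExpN n => t ^- n
  | SOne => 1
  | SAdd a b => seval a + seval b
  | SOpp a => - seval a
  | SMul a b => seval a * seval b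
  | SExp a n => seval a ^+ n
  end.

Fixpoint aeval (e : aexpr) : A :=
  match e with
  | ALetter i => nth 0 env i
  | AZero => 0
  | AOne => 1
  | AAdd a b => aeval a + aeval b
  | AOpp a => - aeval a
  | AMul a b => aeval a * aeval b
  | AExp a n => aeval a ^+ n
  | AScale s a => seval s *: aeval a
  end.

Definition word (w : seq nat) : A := foldr (fun i a => nth 0 env i * a) 1 w.
Definition monomial_eval (m : monomial) : A := (m.1%:~R * t ^ m.2.1) *: word m.2.2.
Definition npoly_eval (p : npoly) : A := \sum_(m <- p) monomial_eval m.

Definition rules_hold (rs : seq rule) : Prop :=
  foldr (fun r P => nth 0 env r.1.1 * nth 0 env r.1.2 = aeval r.2 /\ P) True rs.
Definition rules_imply (rs : seq rule) (P : Prop) : Prop :=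
  foldr (fun r P => nth 0 env r.1.1 * nth 0 env r.1.2 = aeval r.2 -> P) P rs.

Lemma rules_implyP rs (P : Prop) : (rules_hold rs -> P) -> rules_imply rs P.
Proof.
by elim: rs => [|r rs IH] /= HP; [exact: HP | move=> hr; apply: IH => hrs; exact: HP].
Qed.

Lemma word_cat u v : word (u ++ v) = word u * word v.
Proof. by elim: u => [|i u IH] /=; rewrite ?mul1r // IH mulrA. Qed.

Lemma npoly_eval_cat p1 p2 : npoly_eval (p1 ++ p2) = npoly_eval p1 + npoly_eval p2.
Proof. exact: big_cat. Qed.

Lemma npoly_eval_term c e w : npoly_eval (npoly_term c e w) = (c%:~R * t ^ e) *: word w.
Proof. by rewrite /npoly_eval big_seq1. Qed.

Lemma npoly_eval_opp p : npoly_eval (npoly_opp p) = - npoly_eval p.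
Proof.
rewrite /npoly_eval big_map -sumrN; apply: eq_bigr => m _.
by rewrite /monomial_eval /= mulrNz mulNr scaleNr.
Qed.

Hypothesis t0 : t != 0.

Lemma monomial_eval_mul m1 m2 :
  monomial_eval (monomial_mul m1 m2) = monomial_eval m1 * monomial_eval m2.
Proof.
by rewrite /monomial_eval /= word_cat intrM expfzDr // -scalerAl -scalerAr scalerA mulrACA.
Qed.

Lemma npoly_eval_mul p1 p2 : npoly_eval (npoly_mul p1 p2) = npoly_eval p1 * npoly_eval p2.
Proof.
rewrite /npoly_eval big_allpairs_dep mulr_suml; apply: eq_bigr => m1 _.
by rewrite mulr_sumr; apply: eq_bigr => m2 _; rewrite monomial_eval_mul.
Qed.

Lemma npoly_eval_exp p n : npoly_eval (npoly_exp p n) = npoly_eval p ^+ n.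
Proof.
by elim: n => [|n IH] /=; rewrite ?npoly_eval_mul ?IH -?exprS // npoly_eval_term mulr1 scale1r.
Qed.

Lemma npoly_of_sexprE s : npoly_eval (npoly_of_sexpr s) = seval s *: 1.
Proof.
elim: s => [||n||a IHa b IHb|a IHa|a IHa b IHb|a IHa n] /=;
  rewrite ?npoly_eval_term ?npoly_eval_cat ?npoly_eval_opp ?npoly_eval_mul ?npoly_eval_exp
          ?mul1r //.
- by rewrite exprnN.
- by rewrite IHa IHb scalerDl.
- by rewrite IHa scaleNr.
- by rewrite IHa IHb -scalerAl mul1r scalerA.
- rewrite IHa; elim: n => [|n IH]; first by rewrite !expr0 scale1r.
  by rewrite !exprS IH -scalerAl mul1r scalerA.
Qed.

Lemma npoly_of_aexprE e : npoly_eval (npoly_of_aexpr e) = aeval e.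
Proof.
elim: e => [i|||a IHa b IHb|a IHa|a IHa b IHb|a IHa n|s a IHa] /=.
- by rewrite npoly_eval_term mul1r scale1r /= mulr1.
- by rewrite /npoly_eval big_nil.
- by rewrite npoly_eval_term mul1r scale1r.
- by rewrite npoly_eval_cat IHa IHb.
- by rewrite npoly_eval_opp IHa.
- by rewrite npoly_eval_mul IHa IHb.
- by rewrite npoly_eval_exp IHa.
- by rewrite npoly_eval_mul npoly_of_sexprE IHa -scalerAl mul1r.
Qed.

Section Rewriting.
Variable rs : seq rule.
Hypothesis hrs : rules_hold rs.

Lemma rule_rhsP x y r : rule_rhs rs x y = Some r -> nth 0 env x * nth 0 env y = aeval r.
Proof.
elim: rs hrs => [|[[x' y'] r'] rs' IH] //= [hr hrs'].
by case: andP => [[/eqP <- /eqP <-] [<-] | _ /(IH hrs')].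
Qed.

Lemma redexP w u r v : redex rs w = Some (u, r, v) -> word w = word u * aeval r * word v.
Proof.
elim: w u r v => [|x [|y w] IH] u r v //.
have -> : redex rs [:: x, y & w] = if rule_rhs rs x y is Some r then Some ([::], r, w)
    else omap (fun uev => (x :: uev.1.1, uev.1.2, uev.2)) (redex rs (y :: w)) by [].
case E: (rule_rhs rs x y) => [r'|].
  by case=> <- <- <-; rewrite /= mul1r mulrA (rule_rhsP E).
case R: (redex rs (y :: w)) => [[[u' r'] v']|] // [<- <- <-].
by move: (IH _ _ _ R) => /= ->; rewrite !mulrA.
Qed.

Lemma npoly_eval_step p : npoly_eval (rewrite_step rs p) = npoly_eval p.
Proof.
rewrite /npoly_eval /rewrite_step big_flatten big_map /=; apply: eq_bigr => m _.
rewrite /rewrite_monomial; case R: (redex rs m.2.2) => [[[u r] v]|]; last by rewrite big_seq1.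
rewrite -/(npoly_eval _) !npoly_eval_mul !npoly_eval_term npoly_of_aexprE mul1r scale1r.
by rewrite -!scalerAl /monomial_eval (redexP R).
Qed.

End Rewriting.

Lemma npoly_eval_coef p s : uniq s -> {subset map snd p <= s} ->
  npoly_eval p = \sum_(k <- s) monomial_eval (npoly_coef p k, k).
Proof.
move=> us; elim: p => [|m p IH] /= sub.
  by rewrite /npoly_eval big_nil big1 // => k _; rewrite /monomial_eval /= mul0r scale0r.
rewrite /npoly_eval big_cons -/(npoly_eval p) IH; last first.
  by move=> k kp; apply: sub; rewrite inE kp orbT.
have ms : m.2 \in s by apply: sub; rewrite inE eqxx.
rewrite (bigD1_seq m.2) //= (bigD1_seq m.2 _ us) //= eqxx addrA; congr (_ + _).
  by rewrite /monomial_eval /= intrD !mulrDl scalerDl addrC.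
by apply: eq_bigr => k; rewrite eq_sym => /negbTE ->.
Qed.

Lemma npoly_eqbP p1 p2 : npoly_eqb p1 p2 -> npoly_eval p1 = npoly_eval p2.
Proof.
move=> /allP eq12; have us := undup_uniq (map snd p1 ++ map snd p2).
rewrite (npoly_eval_coef us) ?(npoly_eval_coef (p := p2) us); last 2 first.
- by move=> k kp; rewrite mem_undup mem_cat kp orbT.
- by move=> k kp; rewrite mem_undup mem_cat kp.
by apply: eq_big_seq => k /eq12 /eqP ->.
Qed.

Lemma nc_normalize_sound rs n e1 e2 :
  npoly_eqb (iter n (rewrite_step rs) (npoly_of_aexpr e1))
            (iter n (rewrite_step rs) (npoly_of_aexpr e2)) ->
  rules_imply rs (aeval e1 = aeval e2).
Proof.
move=> /npoly_eqbP eq12; apply: rules_implyP => hrs.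
have iter_rewrite_step p : npoly_eval (iter n (rewrite_step rs) p) = npoly_eval p.
  by elim: (n) => [|k IH] //=; rewrite npoly_eval_step.
by rewrite -!npoly_of_aexprE -iter_rewrite_step eq12 iter_rewrite_step.
Qed.

End Semantics.

Ltac nc_index x env :=
  lazymatch env with
  | x :: _ => constr:(0%N)
  | _ :: ?env' => let n := nc_index x env' in constr:(S n)
  end.

Ltac nc_reify_scalar t s :=
  lazymatch s with
  | t => constr:(SVar)
  | @GRing.inv _ t => constr:(SVarInv)
  | @GRing.inv _ (@GRing.exp _ t ?n) => constr:(SVarExpN n)
  | @GRing.one _ => constr:(SOne)
  | @GRing.add _ ?a ?b =>
      let x := nc_reify_scalar t a in let y := nc_reify_scalar t b in constr:(SAdd x y)
  | @GRing.opp _ ?a => let x := nc_reify_scalar t a in constr:(SOpp x)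
  | @GRing.mul _ ?a ?b =>
      let x := nc_reify_scalar t a in let y := nc_reify_scalar t b in constr:(SMul x y)
  | @GRing.exp _ ?a ?n => let x := nc_reify_scalar t a in constr:(SExp x n)
  end.

Ltac nc_reify_alg env t e :=
  match constr:(tt) with
  | _ => let i := nc_index e env in constr:(ALetter i)
  | _ =>
    lazymatch e with
    | @GRing.zero _ => constr:(AZero)
    | @GRing.one _ => constr:(AOne)
    | @GRing.add _ ?a ?b =>
        let x := nc_reify_alg env t a in let y := nc_reify_alg env t b in constr:(AAdd x y)
    | @GRing.opp _ ?a => let x := nc_reify_alg env t a in constr:(AOpp x)
    | @GRing.mul _ ?a ?b =>
        let x := nc_reify_alg env t a in let y := nc_reify_alg env t b in constr:(AMul x y)
    | @GRing.exp _ ?a ?n => let x := nc_reify_alg env t a in constr:(AExp x n)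
    | @GRing.scale _ _ ?s ?a =>
        let c := nc_reify_scalar t s in let x := nc_reify_alg env t a in constr:(AScale c x)
    end
  end.

Ltac nc_reify_rules env t G :=
  lazymatch G with
  | (@GRing.mul _ ?x ?y = ?r) -> ?G' =>
      let i := nc_index x env in let j := nc_index y env in
      let e := nc_reify_alg env t r in let rs := nc_reify_rules env t G' in
      constr:((i, j, e) :: rs)
  | _ => constr:(@nil rule)
  end.

Ltac nc_conclusion G := lazymatch G with _ -> ?G' => nc_conclusion G' | ?C => C end.

Ltac nc_normalize env t :=
  repeat match goal with
  | H : @GRing.mul _ ?x ?y = _ |- _ =>
      let i := nc_index x env in let j := nc_index y env in revert H
  end;
  lazymatch goal with |- ?G =>
    let rs := nc_reify_rules env t G in
    lazymatch nc_conclusion G with ?L = ?R =>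
      let e1 := nc_reify_alg env t L in let e2 := nc_reify_alg env t R in
      apply: (@nc_normalize_sound _ t _ env _ rs 40 e1 e2);
      [done | vm_compute; reflexivity]
    end
  end.

(** * q-commutation and the q-Serre polynomial *)

Section Algebra.
Variables (F : fieldType) (A : algType F).

Lemma conj_qcommr (k k' x : A) (s : F) :
  k * k' = 1 -> k' * k = 1 -> k * x * k' = s *: x -> x * k' = s *: (k' * x).
Proof. by move=> kk' k'k h; rewrite -[x * k']mul1r -k'k -mulrA (mulrA k) h scalerAr. Qed.

Lemma conj_qcomml (k k' x : A) (s : F) : s != 0 ->
  k * k' = 1 -> k' * k = 1 -> k * x * k' = s *: x -> x * k = s^-1 *: (k * x).
Proof.
move=> s0 kk' k'k h.
have -> : k * x = s *: (x * k) by rewrite -[k * x]mulr1 -k'k mulrA h scalerAl.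
by rewrite scalerA mulVf ?scale1r.
Qed.

Lemma conjZ (k k' x : A) (s : F) : k * (s *: x) * k' = s *: (k * x * k').
Proof. by rewrite -scalerAr -scalerAl. Qed.

Lemma commr_inverse (a a' b : A) : a * b = b * a -> a * a' = 1 -> a' * a = 1 -> a' * b = b * a'.
Proof.
by move=> ab aa' a'a; rewrite -[a' * b]mulr1 -aa' mulrA -(mulrA a') -ab !mulrA a'a mul1r.
Qed.

Lemma qcomm_inverse (y k k' : A) (a a' b b' : F) :
  k * k' = 1 -> k' * k = 1 -> a' * a = 1 -> b' = - (a' * b) ->
  y * k = a *: (k * y) + b *: 1 -> y * k' = a' *: (k' * y) + b' *: (k' * k').
Proof.
move=> kk' k'k aa' -> h.
have -> : k' * y = a *: (y * k') + b *: (k' * k').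
  rewrite -{1}[y]mulr1 -kk' (mulrA y) h mulrDl mulrDr -!scalerAl -!scalerAr !mul1r.
  by rewrite !mulrA k'k mul1r.
by rewrite scalerDr scalerA aa' scale1r scaleNr -scalerA addrK.
Qed.

Lemma qcomm_central (y w c u : A) (a b : F) : y * c = c * y ->
  y * w = a *: (w * y) + b *: u -> y * (w * c) = a *: (w * c * y) + b *: (u * c).
Proof. by move=> yc h; rewrite mulrA h mulrDl -!scalerAl -!mulrA yc. Qed.

Lemma linv_mulr_eq0 (x y z : A) : y * x = 1 -> x * z = 0 -> z = 0.
Proof. by move=> yx xz; rewrite -[z]mul1r -yx -mulrA xz mulr0. Qed.

Lemma rinv_subr_mul (k k' x : A) : k * k' = 1 -> 1 - k * (k' - k' * x) = x.
Proof. by move=> kk'; rewrite mulrBr mulrA kk' mul1r opprB subrKC. Qed.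

Lemma linv_subr_mul (k k' y : A) : k' * k = 1 -> k' - k' * (1 - k * y) = y.
Proof. by move=> k'k; rewrite mulrBr mulr1 mulrA k'k mul1r opprB subrKC. Qed.

Lemma serreZ (q a b : F) (x y : A) :
  serre q (a *: x) (b *: y) = (a ^+ 3 * b) *: serre q x y.
Proof.
rewrite /serre !exprZn -!scalerAl -!scalerAr -!scalerAl !scalerA.
rewrite !scalerBr !scalerDr !scalerN !scalerA.
by congr (_ - _ + _ - _); congr (_ *: _); ring.
Qed.

End Algebra.

Definition qbracket (F : fieldType) (q : F) (A : algType F) (x y : A) : A :=
  (q - q^-1)^-1 *: (q *: (x * y) - q^-1 *: (y * x)).

Section QBracket.
Variables (F : fieldType) (q : F) (A : algType F).
Hypotheses (q0 : q != 0) (qD : q - q^-1 != 0).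

Lemma qbracketP (x y z : A) :
  qbracket q x y = z <-> q *: (x * y) - q^-1 *: (y * x) = (q - q^-1) *: z.
Proof.
split=> [<-|h]; first by rewrite scalerA mulfV ?scale1r.
by rewrite /qbracket h scalerA mulVf ?scale1r.
Qed.

Lemma qbracket_mulr (x y z : A) :
  qbracket q x y = z -> x * y = q ^- 2 *: (y * x) + (1 - q ^- 2) *: z.
Proof.
move=> /qbracketP h.
have {}h : q *: (x * y) = q^-1 *: (y * x) + (q - q^-1) *: z by rewrite -h addrC subrK.
rewrite -[x * y]scale1r -{1}(mulVf q0) -scalerA h scalerDr !scalerA.
by congr (_ *: _ + _ *: _); field.
Qed.

Lemma qbracket_mull (x y z : A) :
  qbracket q x y = z -> y * x = q ^+ 2 *: (x * y) + (1 - q ^+ 2) *: z.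
Proof.
move=> /qbracketP h.
have {}h : q^-1 *: (y * x) = q *: (x * y) - (q - q^-1) *: z by rewrite -h opprB addrC subrK.
rewrite -[y * x]scale1r -{1}(mulfV q0) -scalerA h scalerBr !scalerA -scaleNr.
by congr (_ *: _ + _ *: _); field.
Qed.

Lemma q_sqr_sub1_neq0 : q * q - 1 != 0.
Proof. by rewrite -(mulfV q0) -mulrBr mulf_neq0. Qed.

Lemma qint3 : qint q 3 = q ^+ 2 + 1 + q ^- 2.
Proof. by rewrite /qint; field; rewrite q0 q_sqr_sub1_neq0. Qed.

Lemma qint3V : qint q 3 = q ^- 2 + 1 + (q ^- 2)^-1.
Proof. by rewrite qint3 invrK addrC [q ^+ 2 + 1]addrC addrA. Qed.

End QBracket.

Section Serre.
Variables (F : fieldType) (q t : F) (A : algType F) (a b f g : A).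
Hypotheses (t0 : t != 0) (q3 : qint q 3 = t + 1 + t^-1).
Hypotheses (hba : b * a = a * b) (hfa : f * a = t *: (a * f)) (hfb : f * b = t^-1 *: (b * f))
  (hga : g * a = t^-1 *: (a * g)) (hgb : g * b = t *: (b * g)).

Lemma serre_shift : serre q (a + f) (b + g) = serre q f g.
Proof. rewrite /serre q3; nc_normalize [:: a; b; f; g] t. Qed.

Lemma serre_shift_mul : serre q (a - a * f) (b - b * g) = a ^+ 3 * b * serre q f g.
Proof. rewrite /serre q3; nc_normalize [:: a; b; f; g] t. Qed.

End Serre.

(** * Relations in the substituted generators *)

(** [Uq_rel q G] is convertible to [Uq_rel_with q (q - q^-1)^-1 (Kp G) (Km G) (ep G) (em G)]. *)
Definition Uq_rel_with (F : fieldType) (q d : F) (A : algType F) (K Ki E Fm : 'I_2 -> A) : Prop :=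
  (forall i, K i * Ki i = 1 /\ Ki i * K i = 1) /\
  (K 0 * K 1 = K 1 * K 0) /\
  (forall i, K i * E i * Ki i = q ^+ 2 *: E i /\ K i * Fm i * Ki i = q ^- 2 *: Fm i) /\
  (forall i j, i != j -> K i * E j * Ki i = q ^- 2 *: E j /\ K i * Fm j * Ki i = q ^+ 2 *: Fm j) /\
  (forall i, E i * Fm i - Fm i * E i = d *: (K i - Ki i)) /\
  (E 0 * Fm 1 - Fm 1 * E 0 = 0 /\ Fm 0 * E 1 - E 1 * Fm 0 = 0) /\
  (forall i j, i != j -> serre q (E i) (E j) = 0 /\ serre q (Fm i) (Fm j) = 0).

Lemma ord2_neq (i j : 'I_2) : i != j -> (i = 0 /\ j = 1) \/ (i = 1 /\ j = 0).
Proof. by case: i j => [[|[|//]] ?] [[|[|//]] ?] //= _; [left | right]; split; apply: val_inj. Qed.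

Lemma ord2_other (i : 'I_2) : exists2 j, i != j & j != i.
Proof. by case: i => [[|[|//]] ?]; [exists 1 | exists 0]. Qed.

Lemma Uq_rel_withZ (F : fieldType) (q d s : F) (A : algType F) (K Ki E Fm : 'I_2 -> A) :
  Uq_rel_with q d K Ki E Fm -> Uq_rel_with q (s * d) K Ki (fun i => s *: E i) Fm.
Proof.
move=> [hinv [hK [hc1 [hc2 [hEF [[h01 h10] hS]]]]]].
do 2 (split=> //); split; [|split; [|split; [|split]]].
- by move=> i; have [h1 h2] := hc1 i; rewrite conjZ h1 scalerA mulrC -scalerA.
- by move=> i j hij; have [h1 h2] := hc2 i j hij; rewrite conjZ h1 scalerA mulrC -scalerA.
- by move=> i; rewrite -scalerAl -scalerAr -scalerBr hEF scalerA.
- by rewrite -scalerAl -scalerAr -scalerBr h01 -scalerAl -scalerAr -scalerBr h10 !scaler0.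
- move=> i j hij; have [h1 h2] := hS i j hij; split=> //.
  by rewrite serreZ h1 scaler0.
Qed.

Section UqToU.
Variables (F : fieldType) (q : F) (A : algType F) (K Ki E Fm : 'I_2 -> A).
Hypotheses (q0 : q != 0) (qD : q - q^-1 != 0).
Hypothesis hrel : Uq_rel_with q (q ^+ 2 - 1) K Ki E Fm.

Lemma Uq_K_Ki i : K i * Ki i = 1.
Proof. by have [/(_ i) []] := hrel. Qed.

Lemma Uq_Ki_K i : Ki i * K i = 1.
Proof. by have [/(_ i) []] := hrel. Qed.

Lemma Uq_K_comm i j : K j * K i = K i * K j.
Proof.
have [_ [h01 _]] := hrel.
by case: (eqVneq i j) => [-> // | /ord2_neq [[-> ->] | [-> ->]]].
Qed.

Lemma Uq_Ki_K_comm i j : Ki i * K j = K j * Ki i.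
Proof. exact: commr_inverse (Uq_K_comm j i) (Uq_K_Ki i) (Uq_Ki_K i). Qed.

Lemma Uq_Ki_comm i j : Ki j * Ki i = Ki i * Ki j.
Proof. exact: commr_inverse (esym (Uq_Ki_K_comm i j)) (Uq_K_Ki j) (Uq_Ki_K j). Qed.

Lemma Uq_E_qcomm i : E i * Ki i = q ^+ 2 *: (Ki i * E i) /\ E i * K i = q ^- 2 *: (K i * E i).
Proof.
have [_ [_ [/(_ i) [h _] _]]] := hrel.
split; [exact: conj_qcommr (Uq_K_Ki i) (Uq_Ki_K i) h | ].
exact: conj_qcomml (expf_neq0 _ q0) (Uq_K_Ki i) (Uq_Ki_K i) h.
Qed.

Lemma Uq_F_qcomm i : Fm i * Ki i = q ^- 2 *: (Ki i * Fm i) /\ Fm i * K i = q ^+ 2 *: (K i * Fm i).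
Proof.
have [_ [_ [/(_ i) [_ h] _]]] := hrel.
split; [exact: conj_qcommr (Uq_K_Ki i) (Uq_Ki_K i) h | ].
rewrite -[q ^+ 2]invrK; apply: conj_qcomml (Uq_K_Ki i) (Uq_Ki_K i) h.
by rewrite invr_eq0 expf_neq0.
Qed.

Lemma Uq_E_qcomm_other i j : i != j ->
  E j * Ki i = q ^- 2 *: (Ki i * E j) /\ E j * K i = q ^+ 2 *: (K i * E j).
Proof.
move=> hij; have [_ [_ [_ [/(_ i j hij) [h _] _]]]] := hrel.
split; [exact: conj_qcommr (Uq_K_Ki i) (Uq_Ki_K i) h | ].
rewrite -[q ^+ 2]invrK; apply: conj_qcomml (Uq_K_Ki i) (Uq_Ki_K i) h.
by rewrite invr_eq0 expf_neq0.
Qed.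

Lemma Uq_F_qcomm_other i j : i != j ->
  Fm j * Ki i = q ^+ 2 *: (Ki i * Fm j) /\ Fm j * K i = q ^- 2 *: (K i * Fm j).
Proof.
move=> hij; have [_ [_ [_ [/(_ i j hij) [_ h] _]]]] := hrel.
split; [exact: conj_qcommr (Uq_K_Ki i) (Uq_Ki_K i) h | ].
exact: conj_qcomml (expf_neq0 _ q0) (Uq_K_Ki i) (Uq_Ki_K i) h.
Qed.

Lemma Uq_E_F i : E i * Fm i = Fm i * E i + (q ^+ 2 - 1) *: (K i - Ki i).
Proof. by have [_ [_ [_ [_ [<- _]]]]] := hrel; rewrite addrC subrK. Qed.

Lemma Uq_E_F_other i j : i != j -> E i * Fm j = Fm j * E i.
Proof.
have [_ [_ [_ [_ [_ [[h01 h10] _]]]]]] := hrel.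
by case/ord2_neq=> [[-> ->] | [-> ->]]; apply/eqP; rewrite -subr_eq0 ?h01 // -opprB h10 oppr0.
Qed.

Ltac Uq_normalize i j hij hji :=
  move: (Uq_K_Ki i) (Uq_Ki_K i) (Uq_K_Ki j) (Uq_Ki_K j) => ? ? ? ?;
  move: (Uq_K_comm i j) (esym (Uq_Ki_K_comm i j)) (Uq_Ki_K_comm j i) (Uq_Ki_comm i j) => ? ? ? ?;
  move: (Uq_E_qcomm i) (Uq_E_qcomm j) (Uq_F_qcomm i) (Uq_F_qcomm j) => [? ?] [? ?] [? ?] [? ?];
  move: (Uq_E_qcomm_other hij) (Uq_E_qcomm_other hji) => [? ?] [? ?];
  move: (Uq_F_qcomm_other hij) (Uq_F_qcomm_other hji) => [? ?] [? ?];
  move: (Uq_E_F i) (Uq_E_F j) (Uq_E_F_other hij) (Uq_E_F_other hji) => ? ? ? ?;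
  nc_normalize [:: K i; Ki i; K j; Ki j; E i; Fm i; E j; Fm j] q.

Lemma U_rel_of_Uq_rel_with :
  U_rel q (UGens (fun i => Ki i - Ki i * E i) (fun i => Ki i + Fm i) K Ki).
Proof.
have K01 i j : i != j -> K 0 * K 1 = K i * K j.
  by case/ord2_neq=> [[-> ->] | [-> ->]]; rewrite // Uq_K_comm.
have Ki01 i j : i != j -> Ki 0 * Ki 1 = Ki i * Ki j.
  by case/ord2_neq=> [[-> ->] | [-> ->]]; rewrite // Uq_Ki_comm.
rewrite /U_rel /=; split; first by move=> i; rewrite Uq_K_Ki Uq_Ki_K.
split.
  move=> i; have [j hij hji] := ord2_other i; rewrite (K01 i j hij).
  by split; Uq_normalize i j hij hji.
do 3 (split; first by move=> i; have [j hij hji] := ord2_other i;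
                      apply/(qbracketP qD); Uq_normalize i j hij hji).
split.
  move=> i j hij; have hji : j != i by rewrite eq_sym.
  by rewrite (Ki01 i j hij); apply/(qbracketP qD); Uq_normalize i j hij hji.
move=> i j hij; have hji : j != i by rewrite eq_sym.
have [_ [_ [_ [_ [_ [_ /(_ i j hij) [sE sF]]]]]]] := hrel.
split.
  rewrite (serre_shift_mul (expf_neq0 _ q0) (qint3 q0 qD) (Uq_Ki_comm i j)) ?sE ?mulr0 //.
  - exact: (Uq_E_qcomm i).1.
  - exact: (Uq_E_qcomm_other hji).1.
  - exact: (Uq_E_qcomm_other hij).1.
  - exact: (Uq_E_qcomm j).1.
rewrite (serre_shift (t := q ^- 2) _ (qint3V q0 qD) (Uq_Ki_comm i j)) ?sF //.
- by rewrite invr_eq0 expf_neq0.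
- exact: (Uq_F_qcomm i).1.
- by rewrite invrK; exact: (Uq_F_qcomm_other hji).1.
- by rewrite invrK; exact: (Uq_F_qcomm_other hij).1.
- exact: (Uq_F_qcomm j).1.
Qed.

End UqToU.

Section UToUq.
Variables (F : fieldType) (q : F) (A : algType F) (g : U_gens A).
Hypotheses (q0 : q != 0) (qD : q - q^-1 != 0) (hU : U_rel q g).

Lemma U_kp_km i : kp g i * km g i = 1.
Proof. by have [/(_ i) []] := hU. Qed.

Lemma U_km_kp i : km g i * kp g i = 1.
Proof. by have [/(_ i) []] := hU. Qed.

Lemma U_kp_comm i j : kp g j * kp g i = kp g i * kp g j.
Proof.
have h01 : kp g 0 * kp g 1 = kp g 1 * kp g 0.
  have [_ [/(_ 1) [_ _ h _] _]] := hU.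
  by rewrite -[LHS]mulr1 -(U_kp_km 1) mulrA h -!mulrA U_kp_km mulr1.
by case: (eqVneq i j) => [-> // | /ord2_neq [[-> ->] | [-> ->]]].
Qed.

Lemma U_km_kp_comm i j : km g i * kp g j = kp g j * km g i.
Proof. exact: commr_inverse (U_kp_comm j i) (U_kp_km i) (U_km_kp i). Qed.

Lemma U_km_comm i j : km g j * km g i = km g i * km g j.
Proof. exact: commr_inverse (esym (U_km_kp_comm i j)) (U_kp_km j) (U_km_kp j). Qed.

Lemma U_kp01 i j : i != j -> kp g 0 * kp g 1 = kp g i * kp g j.
Proof. by case/ord2_neq=> [[-> ->] | [-> ->]]; rewrite // U_kp_comm. Qed.

Lemma U_km01 i j : i != j -> km g 0 * km g 1 = km g i * km g j.
Proof. by case/ord2_neq=> [[-> ->] | [-> ->]]; rewrite // U_km_comm. Qed.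

Lemma U_central i j y : i != j -> (kp g 0 * kp g 1) * y = y * (kp g 0 * kp g 1) ->
  y * (kp g i * kp g j) = kp g i * kp g j * y /\ y * (km g i * km g j) = km g i * km g j * y.
Proof.
move=> hij; rewrite (U_kp01 hij) => /esym cy; split=> //.
apply/esym/(commr_inverse (a := kp g j * kp g i)); first by rewrite U_kp_comm.
  by rewrite -mulrA (mulrA (kp g i)) U_kp_km mul1r U_kp_km.
by rewrite -mulrA (mulrA (km g j)) U_km_kp mul1r U_km_kp.
Qed.

Lemma U_yp_qcomm i :
  yp g i * kp g i = q ^- 2 *: (kp g i * yp g i) + (1 - q ^- 2) *: 1 /\
  yp g i * km g i = q ^+ 2 *: (km g i * yp g i) + (1 - q ^+ 2) *: (km g i * km g i).
Proof.
have [_ [_ [/(_ i) /(qbracket_mulr q0 qD) h _]]] := hU; split=> //.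
apply: qcomm_inverse (U_kp_km i) (U_km_kp i) _ _ h; first by rewrite mulfV ?expf_neq0.
by rewrite mulrBr mulr1 mulfV ?expf_neq0 // opprB.
Qed.

Lemma U_ym_qcomm i :
  ym g i * kp g i = q ^+ 2 *: (kp g i * ym g i) + (1 - q ^+ 2) *: 1 /\
  ym g i * km g i = q ^- 2 *: (km g i * ym g i) + (1 - q ^- 2) *: (km g i * km g i).
Proof.
have [_ [_ [_ [/(_ i) /(qbracket_mull q0 qD) h _]]]] := hU; split=> //.
apply: qcomm_inverse (U_kp_km i) (U_km_kp i) _ _ h; first by rewrite mulVf ?expf_neq0.
by rewrite mulrBr mulr1 mulVf ?expf_neq0 // opprB.
Qed.

Lemma U_qcomm_other i j y (s b s' b' : F) : i != j ->
  kp g 0 * kp g 1 * y = y * (kp g 0 * kp g 1) ->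
  y * kp g i = s *: (kp g i * y) + b *: 1 ->
  y * km g i = s' *: (km g i * y) + b' *: (km g i * km g i) ->
  y * kp g j = s' *: (kp g j * y) + b' *: (km g i * kp g j) /\
  y * km g j = s *: (km g j * y) + b *: (km g i * km g j).
Proof.
move=> hij hc hp hm; have [cp cm] := U_central hij hc.
have ep : km g i * (kp g i * kp g j) = kp g j by rewrite mulrA U_km_kp mul1r.
have em : kp g i * (km g i * km g j) = km g j by rewrite mulrA U_kp_km mul1r.
split; [move: (qcomm_central cp hm) | move: (qcomm_central cm hp)].
  by rewrite -[km g i * km g i * _]mulrA !ep.
by rewrite !em mul1r.
Qed.

Lemma U_yp_qcomm_other i j : i != j ->
  yp g i * kp g j = q ^+ 2 *: (kp g j * yp g i) + (1 - q ^+ 2) *: (km g i * kp g j) /\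
  yp g i * km g j = q ^- 2 *: (km g j * yp g i) + (1 - q ^- 2) *: (km g i * km g j).
Proof.
move=> hij; have [_ [/(_ i) [hc _ _ _] _]] := hU; have [hp hm] := U_yp_qcomm i.
exact: U_qcomm_other hij hc hp hm.
Qed.

Lemma U_ym_qcomm_other i j : i != j ->
  ym g i * kp g j = q ^- 2 *: (kp g j * ym g i) + (1 - q ^- 2) *: (km g i * kp g j) /\
  ym g i * km g j = q ^+ 2 *: (km g j * ym g i) + (1 - q ^+ 2) *: (km g i * km g j).
Proof.
move=> hij; have [_ [/(_ i) [_ hc _ _] _]] := hU; have [hp hm] := U_ym_qcomm i.
exact: U_qcomm_other hij hc hp hm.
Qed.

Lemma U_ym_yp i : ym g i * yp g i = q ^- 2 *: (yp g i * ym g i) + (1 - q ^- 2) *: 1.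
Proof. by have [_ [_ [_ [_ [/(_ i) /(qbracket_mulr q0 qD) h _]]]]] := hU. Qed.

Lemma U_ym_yp_other i j : i != j ->
  ym g j * yp g i = q ^+ 2 *: (yp g i * ym g j) + (1 - q ^+ 2) *: (km g i * km g j).
Proof.
move=> hij; have [_ [_ [_ [_ [_ [/(_ i j hij) /(qbracket_mull q0 qD) h _]]]]]] := hU.
by rewrite -(U_km01 hij).
Qed.

Ltac U_normalize i j hij hji :=
  move: (U_kp_km i) (U_km_kp i) (U_kp_km j) (U_km_kp j) => ? ? ? ?;
  move: (U_kp_comm i j) (esym (U_km_kp_comm i j)) (U_km_kp_comm j i) (U_km_comm i j) => ? ? ? ?;
  move: (U_yp_qcomm i) (U_yp_qcomm j) (U_ym_qcomm i) (U_ym_qcomm j) => [? ?] [? ?] [? ?] [? ?];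
  move: (U_yp_qcomm_other hij) (U_yp_qcomm_other hji) => [? ?] [? ?];
  move: (U_ym_qcomm_other hij) (U_ym_qcomm_other hji) => [? ?] [? ?];
  move: (U_ym_yp i) (U_ym_yp j) (U_ym_yp_other hij) (U_ym_yp_other hji) => ? ? ? ?;
  nc_normalize [:: kp g i; km g i; kp g j; km g j; yp g i; ym g i; yp g j; ym g j] q.

Lemma U_E_qcomm i j : i != j ->
  (1 - kp g i * yp g i) * km g i = q ^+ 2 *: (km g i * (1 - kp g i * yp g i)) /\
  (1 - kp g i * yp g i) * km g j = q ^- 2 *: (km g j * (1 - kp g i * yp g i)).
Proof.
move=> hij; have hji : j != i by rewrite eq_sym.
by split; U_normalize i j hij hji.
Qed.

Lemma U_F_qcomm i j : i != j ->
  (ym g i - km g i) * km g i = q ^- 2 *: (km g i * (ym g i - km g i)) /\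
  (ym g i - km g i) * km g j = q ^+ 2 *: (km g j * (ym g i - km g i)).
Proof.
move=> hij; have hji : j != i by rewrite eq_sym.
by split; U_normalize i j hij hji.
Qed.

Lemma Uq_rel_with_of_U_rel :
  Uq_rel_with q (q ^+ 2 - 1) (kp g) (km g)
    (fun i => 1 - kp g i * yp g i) (fun i => ym g i - km g i).
Proof.
split; first by move=> i; rewrite U_kp_km U_km_kp.
split; first exact: U_kp_comm.
split.
  by move=> i; have [j hij hji] := ord2_other i; split; U_normalize i j hij hji.
split.
  move=> i j hij; have hji : j != i by rewrite eq_sym.
  by split; U_normalize i j hij hji.
split.
  by move=> i; have [j hij hji] := ord2_other i; U_normalize i j hij hji.
split.
  have h01 : (0 : 'I_2) != 1 by [].
  have h10 : (1 : 'I_2) != 0 by [].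
  by split; U_normalize (0 : 'I_2) (1 : 'I_2) h01 h10.
move=> i j hij; have hji : j != i by rewrite eq_sym.
have [_ [_ [_ [_ [_ [_ /(_ i j hij) [sE sF]]]]]]] := hU.
have [hEi hEij] := U_E_qcomm hij; have [hEj hEji] := U_E_qcomm hji.
have [hFi hFij] := U_F_qcomm hij; have [hFj hFji] := U_F_qcomm hji.
split.
  have := serre_shift_mul (expf_neq0 _ q0) (qint3 q0 qD) (U_km_comm i j) hEi hEij hEji hEj.
  rewrite !linv_subr_mul ?U_km_kp // sE => /esym h.
  have inv : kp g j * kp g i ^+ 3 * (km g i ^+ 3 * km g j) = 1 by U_normalize i j hij hji.
  exact: linv_mulr_eq0 inv h.
rewrite -sF -(serre_shift (t := q ^- 2) _ (qint3V q0 qD) (U_km_comm i j) hFi) ?subrKC //.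
- by rewrite invr_eq0 expf_neq0.
- by rewrite invrK.
- by rewrite invrK.
Qed.

End UToUq.

(** * The isomorphism *)

Lemma U_rel_of_Uq_rel (F : fieldType) (q : F) (A : algType F) (G : Uq_gens A) :
  q != 0 -> q - q^-1 != 0 -> Uq_rel q G ->
  U_rel q (UGens (fun i => Km G i - Km G i * ((q * (q - q^-1) ^+ 2) *: ep G i))
                 (fun i => Km G i + em G i) (Kp G) (Km G)).
Proof.
move=> q0 qD hG; apply: U_rel_of_Uq_rel_with => //.
have hG' : Uq_rel_with q (q - q^-1)^-1 (Kp G) (Km G) (ep G) (em G) := hG.
have := Uq_rel_withZ (q * (q - q^-1) ^+ 2) hG'.
by rewrite (_ : _ * _ = q ^+ 2 - 1) //; field; rewrite q0 q_sqr_sub1_neq0.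
Qed.

Lemma Uq_rel_of_U_rel (F : fieldType) (q : F) (A : algType F) (g : U_gens A) :
  q != 0 -> q - q^-1 != 0 -> U_rel q g ->
  Uq_rel q (UqGens (fun i => (q * (q - q^-1) ^+ 2)^-1 *: (1 - kp g i * yp g i))
                   (fun i => ym g i - km g i) (kp g) (km g)).
Proof.
move=> q0 qD hg.
have := Uq_rel_withZ (q * (q - q^-1) ^+ 2)^-1 (Uq_rel_with_of_U_rel q0 qD hg).
by rewrite (_ : _ * _ = (q - q^-1)^-1) //; field; rewrite q0 q_sqr_sub1_neq0.
Qed.

Section AlgHom.
Variable F : fieldType.

Lemma alg_hom_id (A : algType F) : alg_hom (@idfun A).
Proof. by []. Qed.

Lemma alg_hom_comp (A B C : algType F) (f : A -> B) (h : B -> C) :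
  alg_hom f -> alg_hom h -> alg_hom (h \o f).
Proof.
move=> [f1 f2 f3 f4] [h1 h2 h3 h4]; split=> [x y|a x||x y] /=.
- by rewrite f1 h1.
- by rewrite f2 h2.
- by rewrite f3 h3.
- by rewrite f4 h4.
Qed.

Lemma alg_homB (A B : algType F) (f : A -> B) x y : alg_hom f -> f (x - y) = f x - f y.
Proof. by move=> [f1 f2 _ _]; rewrite f1 -scaleN1r f2 scaleN1r. Qed.

Lemma is_U_endo_id (q : F) (A : algType F) (g : U_gens A) (f : A -> A) :
  is_U q g -> alg_hom f -> U_hom_on_gens g g f -> f =1 idfun.
Proof.
move=> [hg univ] hf fg x; have [f0 [_ _ f0_uniq]] := univ A g hg.
by rewrite (f0_uniq f hf fg x) -(f0_uniq idfun (alg_hom_id A)).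
Qed.

Lemma is_Uq_endo_id (q : F) (A : algType F) (G : Uq_gens A) (f : A -> A) :
  is_Uq q G -> alg_hom f -> Uq_hom_on_gens G G f -> f =1 idfun.
Proof.
move=> [hG univ] hf fG x; have [f0 [_ _ f0_uniq]] := univ A G hG.
by rewrite (f0_uniq f hf fG x) -(f0_uniq idfun (alg_hom_id A)).
Qed.

End AlgHom.

Section InverseMaps.
Variables (F : fieldType) (q : F) (Uq U : algType F) (G : Uq_gens Uq) (g : U_gens U).
Variables (phi : U -> Uq) (psi : Uq -> U).
Hypotheses (c0 : q * (q - q^-1) ^+ 2 != 0) (phiH : alg_hom phi) (psiH : alg_hom psi).
Hypothesis phiG : U_hom_on_gens g
  (UGens (fun i => Km G i - Km G i * ((q * (q - q^-1) ^+ 2) *: ep G i))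
         (fun i => Km G i + em G i) (Kp G) (Km G)) phi.
Hypothesis psiG : Uq_hom_on_gens G
  (UqGens (fun i => (q * (q - q^-1) ^+ 2)^-1 *: (1 - kp g i * yp g i))
          (fun i => ym g i - km g i) (kp g) (km g)) psi.

Lemma psi_phi_on_gens : (forall i, km g i * kp g i = 1) -> U_hom_on_gens g g (psi \o phi).
Proof.
move=> km_kp i; have [psi_add psi_scale _ psi_mul] := psiH.
have [p1 p2 p3 p4] := phiG i; have [s1 s2 s3 s4] := psiG i.
rewrite /= in p1 p2 p3 p4 s1 s2 s3 s4; split=> /=.
- rewrite p1 (alg_homB _ _ psiH) psi_mul psi_scale s1 s4 scalerA mulfV // scale1r.
  exact: linv_subr_mul.
- by rewrite p2 psi_add s2 s4 subrKC.
- by rewrite p3 s3.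
- by rewrite p4 s4.
Qed.

Lemma phi_psi_on_gens : (forall i, Kp G i * Km G i = 1) -> Uq_hom_on_gens G G (phi \o psi).
Proof.
move=> Kp_Km i; have [_ phi_scale phi1 phi_mul] := phiH.
have [p1 p2 p3 p4] := phiG i; have [s1 s2 s3 s4] := psiG i.
rewrite /= in p1 p2 p3 p4 s1 s2 s3 s4; split=> /=.
- rewrite s1 phi_scale (alg_homB _ _ phiH) phi1 phi_mul p3 p1 rinv_subr_mul //.
  by rewrite scalerA mulVf // scale1r.
- by rewrite s2 (alg_homB _ _ phiH) p2 p4 addrC addKr.
- by rewrite s3 p3.
- by rewrite s4 p4.
Qed.

End InverseMaps.

Theorem theorem2p1 (F : closedFieldType) (q : F)
  (hq0 : q != 0) (hq : not_root_of_unity q)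
  (Uq : algType F) (G : Uq_gens Uq) (hUq : is_Uq q G)
  (U : algType F) (g : U_gens U) (hU : is_U q g) :
  exists (phi : U -> Uq) (psi : Uq -> U),
    alg_hom phi /\ alg_hom psi /\ cancel phi psi /\ cancel psi phi /\
        (forall i,
          [/\ phi (kp g i) = Kp G i, phi (km g i) = Km G i,
              phi (ym g i) = Km G i + em G i &
              phi (yp g i) = Km G i - (q * (q - q^-1) ^+ 2) *: (Km G i * ep G i)]) /\
        (forall i,
          [/\ psi (Kp G i) = kp g i, psi (Km G i) = km g i,
              psi (em G i) = ym g i - km g i &
              psi (ep G i) = (q * (q - q^-1) ^+ 2)^-1 *: (1 - kp g i * yp g i)]).
Proof.
have qD : q - q^-1 != 0.
  by apply: contraNneq (hq 2 isT) => /subr0_eq qq; rewrite expr2 {2}qq mulfV.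
have c0 : q * (q - q^-1) ^+ 2 != 0 by rewrite mulf_neq0 ?expf_neq0.
have [phi [phiH phiG _]] := hU.2 Uq _ (U_rel_of_Uq_rel hq0 qD hUq.1).
have [psi [psiH psiG _]] := hUq.2 U _ (Uq_rel_of_U_rel hq0 qD hU.1).
exists phi, psi; do 2 (split=> //).
split.
  apply: (is_U_endo_id (f := psi \o phi) hU (alg_hom_comp phiH psiH)).
  by apply: (psi_phi_on_gens c0 psiH phiG psiG) => i; have [[/(_ i) []]] := hU.
split.
  apply: (is_Uq_endo_id (f := phi \o psi) hUq (alg_hom_comp psiH phiH)).
  by apply: (phi_psi_on_gens c0 phiH phiG psiG) => i; have [[/(_ i) []]] := hUq.
split=> i; [have [p1 p2 p3 p4] := phiG i | have [s1 s2 s3 s4] := psiG i]; split=> //.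
by rewrite p1 /= -scalerAr.
Qed.
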